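(* Let $(\mathcal M_i,\phi_{ij})$ be an inverse system of local Moufang sets over a directed set $(I,\succcurlyeq)$, where $\mathcal M_i=(X_i,(U^{(i)}_x)_{x\in X_i})$. Let $L:=\{(x_i)_{i\in I}\in\prod_iX_i\mid x_i\phi_{ij}=x_j\text{ for all }i\succcurlyeq j\}$. Then for $(x_i),(y_i)\in L$, $x_i\sim y_i$ holds for some $i\in I$ iff it holds for all $i\in I$; declare $(x_i)\sim(y_i)$ in that case, an equivalence relation on $L$. For $x=(x_i)\in L$ let $U_x:=\{(u_i)\in\prod_iU^{(i)}_{x_i}\mid u_i\phi_{ij}=\phi_{ij}u_j\text{ for all }i\succcurlyeq j\}$, acting on $L$ componentwise. If $L$ has more than two $\sim$-classes, then $(L,(U_x)_{x\in L})$ is a local Moufang set, and together with the projections $p_j:L\to X_j$, $(x_i)\mapsto x_j$ (which are homomorphisms), it is an inverse limit of $(\mathcal M_i,\phi_{ij})$ in the category of local Moufang sets: $\phi_{ij}\circ p_i=p_j$ for $i\succcurlyeq j$, and for every local Moufang set $\mathcal M$ with homomorphisms $q_i:\mathcal M\to\mathcal M_i$ satisfying $\phi_{ij}\circ q_i=q_j$ there is a unique homomorphism $\psi:\mathcal M\to(L,(U_x))$ with $p_i\circ\psi=q_i$ for all $i$.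
   Context: Group actions are right actions; maps composed left to right ($u\phi$: first $u$, then $\phi$). For $(X,\sim)$, $\overline x$ is the class of $x$, $\overline X$ the set of classes, $\mathrm{Sym}(X,\sim)$ the bijections $g$ with $x\sim y\iff xg\sim yg$, $\overline U$ the induced group on $\overline X$. A local Moufang set is $(X,\sim)$ with $|\overline X|>2$ and subgroups $U_x\le\mathrm{Sym}(X,\sim)$ ($x\in X$) with: (LM0) $x\sim y\Rightarrow\overline{U_x}=\overline{U_y}$; (LM1) $U_x$ fixes $x$ and is sharply transitive on $X\setminus\overline x$; (LM1') $\overline{U_x}$ fixes $\overline x$ and is sharply transitive on $\overline X\setminus\{\overline x\}$; (LM2) $U_x^g=U_{xg}$ for all $x$ and all $g\in\langle U_y\rangle$, where $g^h=h^{-1}gh$. A homomorphism $(X,(U_x))\to(Y,(V_y))$ is a map $\phi:X\to Y$ with $x\sim x'\iff x\phi\sim x'\phi$ and $U_x\phi\subseteq\phi V_{x\phi}$ for all $x$. The category of local Moufang sets has these as objects and morphisms. A directed set is a nonempty partially ordered set in which any two elements have a common upper bound. An inverse system over $I$ consists of local Moufang sets $\mathcal M_i$ ($i\in I$) and homomorphisms $\phi_{ij}:\mathcal M_i\to\mathcal M_j$ for $i\succcurlyeq j$ with $\phi_{ii}=\mathrm{id}$ and $\phi_{jk}\circ\phi_{ij}=\phi_{ik}$ for $i\succcurlyeq j\succcurlyeq k$. *)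

(* Maps are composed left to right in
   the paper (right actions); here a map g is a Rocq function and "x g" is
   written (g x).  So "u then phi" is (fun z => phi (u z)). *)

Definition IsEquivRel {X : Type} (sim : X -> X -> Prop) : Prop :=
  (forall x, sim x x) /\ (forall x y, sim x y -> sim y x) /\
  (forall x y z, sim x y -> sim y z -> sim x z).

Definition Bijective {X : Type} (g : X -> X) : Prop :=
  (forall x y, g x = g y -> x = y) /\ (forall y, exists x, g x = y).

Definition InSym {X : Type} (sim : X -> X -> Prop) (g : X -> X) : Prop :=
  Bijective g /\ (forall x y, sim x y <-> sim (g x) (g y)).

Definition IsSubgroupSym {X : Type} (sim : X -> X -> Prop) (G : (X -> X) -> Prop) : Prop :=
  (forall g, G g -> InSym sim g) /\
  G (fun z => z) /\
  (forall g h, G g -> G h -> G (fun z => h (g z))) /\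
  (forall g, G g -> exists h, G h /\ (forall z, h (g z) = z) /\ (forall z, g (h z) = z)).

Definition MoreThanTwoClasses {X : Type} (sim : X -> X -> Prop) : Prop :=
  exists a b c : X, ~ sim a b /\ ~ sim a c /\ ~ sim b c.

(* The induced groups on X/~ coincide: the induced permutation of g is
   [x] |-> [g x], and two induced permutations are equal iff g z ~ h z for all z. *)
Definition InducedEq {X : Type} (sim : X -> X -> Prop) (A B : (X -> X) -> Prop) : Prop :=
  (forall g, A g -> exists h, B h /\ forall z, sim (g z) (h z)) /\
  (forall h, B h -> exists g, A g /\ forall z, sim (g z) (h z)).

(* The group <U_y | y in X> generated by all root groups: products of elements
   of the U_y (each U_y is a group, so this is closed under inverses). *)
Inductive GenBy {X : Type} (U : X -> (X -> X) -> Prop) : (X -> X) -> Prop :=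
  | GenBy_id : GenBy U (fun z => z)
  | GenBy_step : forall y u g, U y u -> GenBy U g -> GenBy U (fun z => u (g z)).

Definition IsLMS {X : Type} (sim : X -> X -> Prop) (U : X -> (X -> X) -> Prop) : Prop :=
  IsEquivRel sim /\
  MoreThanTwoClasses sim /\
  (forall x, IsSubgroupSym sim (U x)) /\
  (forall x y, sim x y -> InducedEq sim (U x) (U y)) /\
  (forall x g, U x g -> g x = x) /\
  (forall x y z, ~ sim x y -> ~ sim x z -> exists! g, U x g /\ g y = z) /\
  (forall x g, U x g -> sim (g x) x) /\
  (forall x y z, ~ sim x y -> ~ sim x z -> exists g, U x g /\ sim (g y) z) /\
  (forall x y g h, ~ sim x y -> U x g -> U x h -> sim (g y) (h y) ->
     forall w, sim (g w) (h w)) /\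
  (* LM2: U_x^g = U_{xg}, u^g = g^-1 u g, i.e. v in U_{xg} iff v = g^-1 u g
     (left to right) for some u in U_x, i.e. (as g is bijective) g;v = u;g. *)
  (forall x g, GenBy U g -> forall v, U (g x) v <-> exists u, U x u /\ forall z, v (g z) = g (u z)).

Definition IsHom {X Y : Type} (simX : X -> X -> Prop) (U : X -> (X -> X) -> Prop)
  (simY : Y -> Y -> Prop) (V : Y -> (Y -> Y) -> Prop) (f : X -> Y) : Prop :=
  (forall x x', simX x x' <-> simY (f x) (f x')) /\
  (forall x u, U x u -> exists v, V (f x) v /\ forall z, f (u z) = v (f z)).

Definition IsDirectedSet {I : Type} (ge : I -> I -> Prop) : Prop :=
  (exists i : I, True) /\
  (forall i, ge i i) /\
  (forall i j, ge i j -> ge j i -> i = j) /\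
  (forall i j k, ge i j -> ge j k -> ge i k) /\
  (forall i j, exists k, ge k i /\ ge k j).

(* Inverse system over (I, ge); phi i j is only constrained for ge i j. *)
Definition IsInverseSystem {I : Type} (ge : I -> I -> Prop) (X : I -> Type)
  (sim : forall i, X i -> X i -> Prop) (U : forall i, X i -> (X i -> X i) -> Prop)
  (phi : forall i j, X i -> X j) : Prop :=
  (forall i, IsLMS (sim i) (U i)) /\
  (forall i j, ge i j -> IsHom (sim i) (U i) (sim j) (U j) (phi i j)) /\
  (forall i x, phi i i x = x) /\
  (forall i j k, ge i j -> ge j k -> forall x, phi j k (phi i j x) = phi i k x).

Definition Lim {I : Type} (ge : I -> I -> Prop) (X : I -> Type)
  (phi : forall i j, X i -> X j) : Type :=
  { f : forall i, X i | forall i j, ge i j -> phi i j (f i) = f j }.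

Definition limProj {I : Type} {ge : I -> I -> Prop} {X : I -> Type}
  {phi : forall i j, X i -> X j} (j : I) (a : Lim ge X phi) : X j := proj1_sig a j.

Definition limSim {I : Type} {ge : I -> I -> Prop} {X : I -> Type}
  {phi : forall i j, X i -> X j} (sim : forall i, X i -> X i -> Prop)
  (a b : Lim ge X phi) : Prop :=
  exists i, sim i (limProj i a) (limProj i b).

Definition limU {I : Type} {ge : I -> I -> Prop} {X : I -> Type}
  {phi : forall i j, X i -> X j} (U : forall i, X i -> (X i -> X i) -> Prop)
  (a : Lim ge X phi) (g : Lim ge X phi -> Lim ge X phi) : Prop :=
  exists u : forall i, X i -> X i,
    (forall i, U i (limProj i a) (u i)) /\
    (forall i j, ge i j -> forall z, phi i j (u i z) = u j (phi i j z)) /\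
    (forall b i, limProj i (g b) = u i (limProj i b)).

From Stdlib Require Import Classical FunctionalExtensionality ProofIrrelevance ClassicalEpsilon.

(* Everything is computed coordinatewise.  Over a directed index set two
   coordinates can be compared at a common upper bound, and each phi_ij
   reflects ~, so two threads are equivalent in one coordinate iff in all.
   Root groups of the limit consist of compatible families: the element of
   U^{(i)}_{x_i} sending a point y_i outside the class of x_i to a prescribed
   point is unique (LM1), and phi_ij carries it to an element of U^{(j)}_{x_j}
   with the image effect on y_j, so coordinatewise choices are automatically
   compatible.  Inverses and the conjugates needed for (LM2) are compatible
   because the phi_ij intertwine the bijections involved, and the map from a
   cone into the limit is forced coordinatewise. *)

Lemma dependent_functional_choice (A : Type) (B : A -> Type) (R : forall a, B a -> Prop) :
  (forall a, exists b, R a b) -> exists f : forall a, B a, forall a, R a (f a).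
Proof.
  intro H.
  exists (fun a => proj1_sig (constructive_indefinite_description _ (H a))).
  intro a; exact (proj2_sig (constructive_indefinite_description _ (H a))).
Qed.

Lemma bijective_comp (T : Type) (f g : T -> T) :
  Bijective f -> Bijective g -> Bijective (fun z => f (g z)).
Proof.
  intros [f_inj f_surj] [g_inj g_surj]; split.
  - intros x y E; apply g_inj, f_inj, E.
  - intro y; destruct (f_surj y) as [x <-]; destruct (g_surj x) as [w <-]; eauto.
Qed.

Lemma exists_nonequiv {T : Type} {sim : T -> T -> Prop} :
  IsEquivRel sim -> MoreThanTwoClasses sim -> forall y, exists w, ~ sim y w.
Proof.
  intros [_ [Hsym Htr]] [a [b [c [Hab [Hac Hbc]]]]] y.
  destruct (classic (sim y a)) as [Ha | Ha]; [| eauto].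
  destruct (classic (sim y b)) as [Hb | Hb]; [| eauto].
  exfalso; eauto.
Qed.

Section LocalMoufangSet.

Context {T : Type} {sim : T -> T -> Prop} {U : T -> (T -> T) -> Prop}.
Hypothesis HL : IsLMS sim U.

Lemma lms_equiv : IsEquivRel sim.
Proof. apply HL. Qed.

Lemma lms_more : MoreThanTwoClasses sim.
Proof. apply HL. Qed.

Lemma lms_root_subgroup x : IsSubgroupSym sim (U x).
Proof. apply HL. Qed.

Lemma lms_root_InSym x g : U x g -> InSym sim g.
Proof. apply lms_root_subgroup. Qed.

Lemma lms_root_fix x g : U x g -> g x = x.
Proof. apply HL. Qed.

Lemma lms_root_transitive x y z :
  ~ sim x y -> ~ sim x z -> exists! g, U x g /\ g y = z.
Proof. apply HL. Qed.

Lemma lms_LM0 x y : sim x y -> InducedEq sim (U x) (U y).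
Proof. apply HL. Qed.

Lemma lms_induced_sharp x y g h :
  ~ sim x y -> U x g -> U x h -> sim (g y) (h y) -> forall w, sim (g w) (h w).
Proof. apply HL. Qed.

Lemma lms_LM2 x g : GenBy U g ->
  forall v, U (g x) v <-> exists u, U x u /\ forall z, v (g z) = g (u z).
Proof. apply HL. Qed.

Lemma lms_root_eq x y g h : ~ sim x y -> U x g -> U x h -> g y = h y -> g = h.
Proof.
  intros Hxy Hg Hh E.
  assert (Hgy : ~ sim x (g y)).
  { intro C; apply Hxy, (proj2 (lms_root_InSym x g Hg)).
    rewrite (lms_root_fix x g Hg); exact C. }
  destruct (lms_root_transitive x y (g y) Hxy Hgy) as [k [_ Hk]].
  transitivity k; [symmetry |]; apply Hk; auto.
Qed.

Lemma lms_genBy_bijective g : GenBy U g -> Bijective g.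
Proof.
  induction 1 as [| y u g Hu _ IH].
  - split; [auto | intro y; exists y; reflexivity].
  - apply bijective_comp; [apply (lms_root_InSym y u Hu) | exact IH].
Qed.

End LocalMoufangSet.

Section InverseLimit.

Context {I : Type} {ge : I -> I -> Prop} {X : I -> Type}
  {sim : forall i, X i -> X i -> Prop} {U : forall i, X i -> (X i -> X i) -> Prop}
  {phi : forall i j, X i -> X j}.
Hypothesis HD : IsDirectedSet ge.
Hypothesis HS : IsInverseSystem ge X sim U phi.

Local Notation L := (Lim ge X phi).
Local Notation simL := (@limSim I ge X phi sim).
Local Notation UL := (@limU I ge X phi U).

Lemma system_lms i : IsLMS (sim i) (U i).
Proof. apply HS. Qed.

Lemma system_hom i j : ge i j -> IsHom (sim i) (U i) (sim j) (U j) (phi i j).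
Proof. apply HS. Qed.

Lemma phi_sim_iff i j x x' : ge i j -> sim i x x' <-> sim j (phi i j x) (phi i j x').
Proof. intro Hij; apply (system_hom i j Hij). Qed.

Lemma phi_root i j x u : ge i j -> U i x u ->
  exists v, U j (phi i j x) v /\ forall z, phi i j (u z) = v (phi i j z).
Proof. intro Hij; apply (system_hom i j Hij). Qed.

Lemma lim_eq (a b : L) : (forall i, limProj i a = limProj i b) -> a = b.
Proof.
  destruct a as [a Ha], b as [b Hb]; unfold limProj; simpl; intro E.
  assert (a = b) as <- by (apply functional_extensionality_dep; exact E).
  f_equal; apply proof_irrelevance.
Qed.

Lemma limProj_phi i j (a : L) : ge i j -> phi i j (limProj i a) = limProj j a.
Proof. exact (proj2_sig a i j). Qed.

Lemma limProj_sim_transfer i k (a b : L) :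
  sim i (limProj i a) (limProj i b) -> sim k (limProj k a) (limProj k b).
Proof.
  intro Hi; destruct HD as [_ [_ [_ [_ Hdir]]]].
  destruct (Hdir i k) as [m [Hmi Hmk]].
  rewrite <- (limProj_phi m k a Hmk), <- (limProj_phi m k b Hmk).
  apply phi_sim_iff, phi_sim_iff with (j := i); auto.
  rewrite (limProj_phi m i a Hmi), (limProj_phi m i b Hmi); exact Hi.
Qed.

Lemma limSim_all (a b : L) : simL a b -> forall i, sim i (limProj i a) (limProj i b).
Proof. intros [k Hk] i; exact (limProj_sim_transfer k i a b Hk). Qed.

Lemma not_limSim_proj (a b : L) i : ~ simL a b -> ~ sim i (limProj i a) (limProj i b).
Proof. intros H C; apply H; exists i; exact C. Qed.

Lemma limSim_equiv : IsEquivRel simL.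
Proof.
  destruct HD as [[i0 _] _].
  destruct (lms_equiv (system_lms i0)) as [Hr [Hs Ht]].
  split; [| split].
  - intro a; exists i0; apply Hr.
  - intros a b Hab; exists i0; apply Hs, limSim_all, Hab.
  - intros a b c Hab Hbc; exists i0; eapply Ht; apply limSim_all; eassumption.
Qed.

Definition compatible (u : forall i, X i -> X i) : Prop :=
  forall i j, ge i j -> forall z, phi i j (u i z) = u j (phi i j z).

Lemma compatible_id : compatible (fun i z => z).
Proof. intros i j _ z; reflexivity. Qed.

Lemma compatible_comp u v :
  compatible u -> compatible v -> compatible (fun i z => u i (v i z)).
Proof. intros Hu Hv i j Hij z; rewrite Hu, Hv; auto. Qed.

Lemma compatible_cancel_l u w c :
  compatible u -> (forall i x y, u i x = u i y -> x = y) -> compatible c ->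
  (forall i z, u i (w i z) = c i z) -> compatible w.
Proof.
  intros Hu u_inj Hc E i j Hij z.
  apply u_inj; rewrite <- Hu by exact Hij; rewrite !E; apply Hc, Hij.
Qed.

Definition lim_map (u : forall i, X i -> X i) (Hu : compatible u) (b : L) : L :=
  exist (fun f : forall i, X i => forall i j, ge i j -> phi i j (f i) = f j)
    (fun i => u i (limProj i b))
    (fun i j Hij => eq_trans (Hu i j Hij _) (f_equal (u j) (limProj_phi i j b Hij))).

Lemma limProj_lim_map u Hu b i : limProj i (lim_map u Hu b) = u i (limProj i b).
Proof. reflexivity. Qed.

Lemma limU_lim_map a u (Hu : compatible u) :
  (forall i, U i (limProj i a) (u i)) -> UL a (lim_map u Hu).
Proof. intro Hroot; exists u; auto. Qed.

Lemma compatible_inverse u : compatible u -> (forall i, Bijective (u i)) ->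
  exists w, compatible w /\ (forall i z, u i (w i z) = z) /\ (forall i z, w i (u i z) = z).
Proof.
  intros Hu Hbij.
  destruct (dependent_functional_choice I (fun i => X i -> X i)
              (fun i w => forall z, u i (w z) = z)) as [w Hw].
  { intro i; exact (choice (fun z w => u i w = z) (proj2 (Hbij i))). }
  assert (Hwu : forall i z, w i (u i z) = z) by (intros i z; apply (proj1 (Hbij i)), Hw).
  exists w; split; [| split; assumption].
  apply (compatible_cancel_l u w (fun i z => z)); auto.
  - intro i; apply (proj1 (Hbij i)).
  - exact compatible_id.
Qed.

Lemma componentwise_bijective (g : L -> L) u :
  (forall i, Bijective (u i)) -> compatible u ->
  (forall b i, limProj i (g b) = u i (limProj i b)) -> Bijective g.
Proof.
  intros Hbij Hu Hg; split.
  - intros b c E; apply lim_eq; intro i; apply (proj1 (Hbij i)).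
    rewrite <- !Hg, E; reflexivity.
  - intro b; destruct (compatible_inverse u Hu Hbij) as [w [Hw [Huw _]]].
    exists (lim_map w Hw b); apply lim_eq; intro i.
    rewrite Hg, limProj_lim_map; apply Huw.
Qed.

Lemma root_family_compatible (a y : L) u :
  ~ simL a y -> (forall i, U i (limProj i a) (u i)) ->
  (forall i j, ge i j -> phi i j (u i (limProj i y)) = u j (limProj j y)) ->
  compatible u.
Proof.
  intros Hay Hroot Hy i j Hij z.
  destruct (phi_root i j _ _ Hij (Hroot i)) as [v [Hv Hvu]].
  rewrite (limProj_phi i j a Hij) in Hv.
  assert (v = u j) as <-.
  { apply (lms_root_eq (system_lms j) (limProj j a) (limProj j y)); auto.
    - apply not_limSim_proj, Hay.
    - rewrite <- (Hy i j Hij), <- (limProj_phi i j y Hij); symmetry; apply Hvu. }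
  apply Hvu.
Qed.

Lemma limU_InSym a g : UL a g -> InSym simL g.
Proof.
  intros [u [Hroot [Hu Hg]]].
  assert (Hsym : forall i, InSym (sim i) (u i))
    by (intro i; exact (lms_root_InSym (system_lms i) _ _ (Hroot i))).
  split.
  - apply (componentwise_bijective g u); auto; intro i; apply Hsym.
  - intros b c; split; intros [i Hi]; exists i.
    + rewrite !Hg; apply (proj1 (proj2 (Hsym i) _ _)), Hi.
    + rewrite !Hg in Hi; apply (proj2 (proj2 (Hsym i) _ _)), Hi.
Qed.

Lemma limU_fix a g : UL a g -> g a = a.
Proof.
  intros [u [Hroot [_ Hg]]]; apply lim_eq; intro i.
  rewrite Hg; exact (lms_root_fix (system_lms i) _ _ (Hroot i)).
Qed.

Lemma limU_subgroup a : IsSubgroupSym simL (UL a).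
Proof.
  split; [exact (limU_InSym a) | split; [| split]].
  - exists (fun i z => z); split; [| split; [exact compatible_id | reflexivity]].
    intro i; apply (lms_root_subgroup (system_lms i)).
  - intros g h [u [Hu [Hcu Hg]]] [w [Hw [Hcw Hh]]].
    exists (fun i z => w i (u i z)); split; [| split].
    + intro i; apply (lms_root_subgroup (system_lms i)); auto.
    + apply compatible_comp; assumption.
    + intros b i; rewrite Hh, Hg; reflexivity.
  - intros g [u [Hu [Hcu Hg]]].
    destruct (dependent_functional_choice I (fun i => X i -> X i)
      (fun i h => U i (limProj i a) h /\ (forall z, h (u i z) = z) /\ (forall z, u i (h z) = z)))
      as [h Hh].
    { intro i; apply (lms_root_subgroup (system_lms i)), Hu. }
    assert (Hch : compatible h).
    { apply (compatible_cancel_l u h (fun i z => z)); auto using compatible_id.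
      - intros i; apply (lms_root_InSym (system_lms i) _ _ (Hu i)).
      - intros i z; apply Hh. }
    exists (lim_map h Hch); split; [apply limU_lim_map; intro i; apply Hh |].
    split; intro z; apply lim_eq; intro i; rewrite ?Hg, ?limProj_lim_map, ?Hg; apply Hh.
Qed.

Lemma limU_eq a y g h : ~ simL a y -> UL a g -> UL a h -> g y = h y -> g = h.
Proof.
  intros Hay [u [Hu [_ Hg]]] [v [Hv [_ Hh]]] E.
  apply functional_extensionality; intro b; apply lim_eq; intro i.
  rewrite Hg, Hh.
  assert (u i = v i) as ->.
  { apply (lms_root_eq (system_lms i) (limProj i a) (limProj i y)); auto.
    - apply not_limSim_proj, Hay.
    - rewrite <- Hg, <- Hh, E; reflexivity. }
  reflexivity.
Qed.

Lemma limU_transitive a y z :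
  ~ simL a y -> ~ simL a z -> exists! g, UL a g /\ g y = z.
Proof.
  intros Hay Haz.
  destruct (dependent_functional_choice I (fun i => X i -> X i)
    (fun i u => U i (limProj i a) u /\ u (limProj i y) = limProj i z)) as [u Hu].
  { intro i; destruct (lms_root_transitive (system_lms i) (limProj i a)
                         (limProj i y) (limProj i z)) as [g [Hg _]];
      auto using not_limSim_proj; eauto. }
  assert (Hc : compatible u).
  { apply (root_family_compatible a y); [exact Hay | apply Hu |].
    intros i j Hij; rewrite !(proj2 (Hu _)); apply limProj_phi, Hij. }
  exists (lim_map u Hc); split.
  - split; [apply limU_lim_map; apply Hu |].
    apply lim_eq; intro i; apply Hu.
  - intros g' [Hg' E]; apply (limU_eq a y); auto.
    + apply limU_lim_map; apply Hu.
    + rewrite E; apply lim_eq; intro i; apply Hu.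
Qed.

Lemma limU_induced_lift a b : MoreThanTwoClasses simL -> simL a b ->
  forall g, UL a g -> exists h, UL b h /\ forall z, simL (g z) (h z).
Proof.
  intros Hmore Hab g Hg.
  destruct limSim_equiv as [Lr [Ls Lt]].
  destruct HD as [[i0 _] _].
  destruct (exists_nonequiv limSim_equiv Hmore b) as [w Hbw].
  assert (Haw : ~ simL a w) by (intro C; apply Hbw; eauto).
  assert (Hbgw : ~ simL b (g w)).
  { intro C; apply Haw, (proj2 (limU_InSym a g Hg)).
    rewrite (limU_fix a g Hg); eauto. }
  destruct (limU_transitive b w (g w) Hbw Hbgw) as [h [[Hh Hhw] _]].
  exists h; split; [exact Hh |]; intro z; exists i0.
  destruct Hg as [u [Hu [_ Hgu]]], Hh as [v [Hv [_ Hhv]]].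
  destruct (proj1 (lms_LM0 (system_lms i0) _ _ (limSim_all a b Hab i0)) (u i0) (Hu i0))
    as [h' [Hh' Hu_h']].
  (* h_{i0} and h' are in the same root group and agree modulo ~ at w_{i0},
     hence everywhere by (LM1'). *)
  assert (Hv_h' : forall x, sim i0 (v i0 x) (h' x)).
  { apply (lms_induced_sharp (system_lms i0) (limProj i0 b) (limProj i0 w)); auto.
    - apply not_limSim_proj, Hbw.
    - rewrite <- Hhv, Hhw, Hgu; apply Hu_h'. }
  destruct (lms_equiv (system_lms i0)) as [_ [Hs Ht]].
  rewrite Hgu, Hhv; eauto.
Qed.

Lemma limU_LM0 a b : MoreThanTwoClasses simL -> simL a b -> InducedEq simL (UL a) (UL b).
Proof.
  intros Hmore Hab; split; [exact (limU_induced_lift a b Hmore Hab) |].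
  destruct limSim_equiv as [_ [Ls _]].
  intros h Hh; destruct (limU_induced_lift b a Hmore (Ls _ _ Hab) h Hh) as [g [Hg Hgh]].
  exists g; split; [exact Hg |]; intro z; apply Ls, Hgh.
Qed.

Lemma limU_induced_sharp a y g h : ~ simL a y -> UL a g -> UL a h ->
  simL (g y) (h y) -> forall w, simL (g w) (h w).
Proof.
  intros Hay [u [Hu [_ Hg]]] [v [Hv [_ Hh]]] Hgh w.
  destruct HD as [[i0 _] _]; exists i0; rewrite Hg, Hh.
  apply (lms_induced_sharp (system_lms i0) (limProj i0 a) (limProj i0 y)); auto.
  - apply not_limSim_proj, Hay.
  - rewrite <- Hg, <- Hh; apply limSim_all, Hgh.
Qed.

Lemma genBy_limU_components g : GenBy UL g ->
  exists G, (forall i, GenBy (U i) (G i)) /\ compatible G /\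
            forall b i, limProj i (g b) = G i (limProj i b).
Proof.
  induction 1 as [| y u g Hyu _ IH].
  - exists (fun i z => z); split; [constructor |]; split; [exact compatible_id | reflexivity].
  - destruct Hyu as [uu [Huu [Hcu Hu]]], IH as [G [HG [HcG Hg]]].
    exists (fun i z => uu i (G i z)); split; [| split].
    + intro i; apply GenBy_step with (limProj i y); auto.
    + apply compatible_comp; assumption.
    + intros b i; rewrite Hu, Hg; reflexivity.
Qed.

Lemma limU_LM2 a g : GenBy UL g ->
  forall v, UL (g a) v <-> exists u, UL a u /\ forall z, v (g z) = g (u z).
Proof.
  intros Hg v.
  destruct (genBy_limU_components g Hg) as [G [HG [HcG HgG]]].
  assert (Gbij : forall i, Bijective (G i))
    by (intro i; exact (lms_genBy_bijective (system_lms i) _ (HG i))).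
  split.
  - intros [vv [Hvv [Hcv Hv]]].
    destruct (dependent_functional_choice I (fun i => X i -> X i)
      (fun i w => U i (limProj i a) w /\ forall z, vv i (G i z) = G i (w z))) as [w Hw].
    { intro i; apply (lms_LM2 (system_lms i) _ _ (HG i)); rewrite <- HgG; apply Hvv. }
    assert (Hcw : compatible w).
    { apply (compatible_cancel_l G w (fun i z => vv i (G i z))); auto.
      - intro i; apply (proj1 (Gbij i)).
      - apply compatible_comp; assumption.
      - intros i z; symmetry; apply Hw. }
    exists (lim_map w Hcw); split; [apply limU_lim_map; apply Hw |].
    intro z; apply lim_eq; intro i.
    rewrite Hv, !HgG, limProj_lim_map; apply Hw.
  - intros [u [[w [Hw [Hcw Hu]]] Hvu]].
    destruct (compatible_inverse G HcG Gbij) as [H [HcH [_ HHG]]].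
    exists (fun i z => G i (w i (H i z))); split; [| split].
    + intro i; rewrite HgG; apply (lms_LM2 (system_lms i) _ _ (HG i)).
      exists (w i); split; [apply Hw | intro z; rewrite HHG; reflexivity].
    + apply compatible_comp; [assumption | apply compatible_comp; assumption].
    + intros b i; destruct (proj2 (componentwise_bijective g G Gbij HcG HgG) b) as [c <-].
      rewrite Hvu, !HgG, Hu, HHG; reflexivity.
Qed.

Lemma limit_IsLMS : MoreThanTwoClasses simL -> IsLMS simL UL.
Proof.
  intro Hmore.
  split; [exact limSim_equiv |]; split; [exact Hmore |].
  split; [exact limU_subgroup |]; split; [intros; apply limU_LM0; assumption |].
  split; [exact limU_fix |]; split; [exact limU_transitive |].
  split; [intros a g Hg; rewrite (limU_fix a g Hg); apply (proj1 limSim_equiv) |].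
  split.
  { intros a y z Hy Hz; destruct (limU_transitive a y z Hy Hz) as [g [[Hg <-] _]].
    exists g; split; [exact Hg | apply (proj1 limSim_equiv)]. }
  split; [exact limU_induced_sharp | exact limU_LM2].
Qed.

Lemma limProj_hom i : IsHom simL UL (sim i) (U i) (limProj i).
Proof.
  split.
  - intros a b; split; [intro Hab; apply limSim_all, Hab | intro H; exists i; exact H].
  - intros a g [u [Hu [_ Hg]]]; exists (u i); auto.
Qed.

Section UniversalProperty.

Context {Y : Type} {simY : Y -> Y -> Prop} {V : Y -> (Y -> Y) -> Prop}
  {q : forall i, Y -> X i}.
Hypothesis HY : IsLMS simY V.
Hypothesis Hq : forall i, IsHom simY V (sim i) (U i) (q i).
Hypothesis Hqc : forall i j, ge i j -> forall y, phi i j (q i y) = q j y.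

Definition lim_cone (y : Y) : L :=
  exist (fun f : forall i, X i => forall i j, ge i j -> phi i j (f i) = f j)
    (fun i => q i y) (fun i j Hij => Hqc i j Hij y).

Lemma lim_cone_sim y y' : simY y y' <-> simL (lim_cone y) (lim_cone y').
Proof.
  destruct HD as [[i0 _] _]; split.
  - intro H; exists i0; apply (proj1 (Hq i0)), H.
  - intros [i Hi]; apply (proj1 (Hq i)), Hi.
Qed.

Lemma lim_cone_hom : IsHom simY V simL UL lim_cone.
Proof.
  split; [exact lim_cone_sim |].
  intros y u Hu.
  destruct (exists_nonequiv (lms_equiv HY) (lms_more HY) y) as [w Hyw].
  destruct (dependent_functional_choice I (fun i => X i -> X i)
    (fun i v => U i (q i y) v /\ forall z, q i (u z) = v (q i z))) as [v Hv].
  { intro i; apply (proj2 (Hq i)), Hu. }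
  assert (Hcv : compatible v).
  { apply (root_family_compatible (lim_cone y) (lim_cone w)).
    - rewrite <- lim_cone_sim; exact Hyw.
    - intro i; apply Hv.
    - intros i j Hij; unfold limProj; simpl.
      rewrite <- !(proj2 (Hv _)); apply Hqc, Hij. }
  exists (lim_map v Hcv); split; [apply limU_lim_map; intro i; apply Hv |].
  intro z; apply lim_eq; intro i; apply Hv.
Qed.

Lemma lim_universal : exists! psi : Y -> L,
  IsHom simY V simL UL psi /\ (forall i y, limProj i (psi y) = q i y).
Proof.
  exists lim_cone; split; [split; [exact lim_cone_hom | reflexivity] |].
  intros psi [_ Hpsi]; apply functional_extensionality; intro y.
  apply lim_eq; intro i; rewrite Hpsi; reflexivity.
Qed.

End UniversalProperty.

End InverseLimit.

Theorem mainTheorem12 (I : Type) (ge : I -> I -> Prop) (X : I -> Type)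
  (sim : forall i, X i -> X i -> Prop) (U : forall i, X i -> (X i -> X i) -> Prop)
  (phi : forall i j, X i -> X j) :
  IsDirectedSet ge ->
  IsInverseSystem ge X sim U phi ->
  (forall a b : Lim ge X phi,
     (exists i, sim i (limProj i a) (limProj i b)) <->
     (forall i, sim i (limProj i a) (limProj i b))) /\
  IsEquivRel (@limSim I ge X phi sim) /\
  (MoreThanTwoClasses (@limSim I ge X phi sim) ->
     IsLMS (@limSim I ge X phi sim) (@limU I ge X phi U) /\
     (forall i, IsHom (@limSim I ge X phi sim) (@limU I ge X phi U) (sim i) (U i) (limProj i)) /\
     (forall i j, ge i j -> forall a : Lim ge X phi, phi i j (limProj i a) = limProj j a) /\
     (forall (Y : Type) (simY : Y -> Y -> Prop) (V : Y -> (Y -> Y) -> Prop)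
             (q : forall i, Y -> X i),
        IsLMS simY V ->
        (forall i, IsHom simY V (sim i) (U i) (q i)) ->
        (forall i j, ge i j -> forall y, phi i j (q i y) = q j y) ->
        exists! psi : Y -> Lim ge X phi,
          IsHom simY V (@limSim I ge X phi sim) (@limU I ge X phi U) psi /\
          (forall i y, limProj i (psi y) = q i y))).
Proof.
  intros HD HS.
  split; [| split; [exact (limSim_equiv HD HS) |]].
  - intros a b; split.
    + intro Hab; exact (limSim_all HD HS a b Hab).
    + destruct HD as [[i0 _] _]; intro H; exists i0; apply H.
  - intro Hmore; split; [| split; [| split]].
    + exact (limit_IsLMS HD HS Hmore).
    + exact (limProj_hom HD HS).
    + intros i j Hij a; exact (limProj_phi i j a Hij).
    + intros Y simY V q HY Hq Hqc.
      exact (lim_universal HD HS HY Hq Hqc).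
Qed.
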